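(* Assume $\Gamma=[U^{\sf T}\ X^{\sf T}]^{\sf T}$ has full row rank and $Z=AX+BU$. Let $\Delta=[\Delta_Z^{\sf T}\ \Delta_X^{\sf T}\ \Delta_U^{\sf T}]^{\sf T}$ be a perturbation, $(Z_\Delta,X_\Delta,U_\Delta)=(Z+\Delta_Z,X+\Delta_X,U+\Delta_U)$, $\Gamma_\Delta=[U_\Delta^{\sf T}\ X_\Delta^{\sf T}]^{\sf T}$, and let $(P_\Delta,K_\Delta,G_\Delta)$ be an optimal solution of the regularized problem (RP) posed with the perturbed data. Set $M_\Delta=G_\Delta P_\Delta G_\Delta^{\sf T}$. If $$\mu>\left(-1+\sqrt{1+\frac{1}{2\|Z\|_2^2\|M_\Delta\|_2}}\right)^{-1},$$ then $A+BK_\Delta$ is Schur stable, i.e. $\rho(A+BK_\Delta)<1$.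
   Context: $A\in\mathbb{R}^{n\times n}$, $B\in\mathbb{R}^{n\times m}$; data $Z,X\in\mathbb{R}^{n\times T}$, $U\in\mathbb{R}^{m\times T}$. $Q\in\mathbb{R}^{n\times n}$ symmetric positive semidefinite, $R\in\mathbb{R}^{m\times m}$ symmetric positive definite, $\gamma\ge0$. For data $(\tilde Z,\tilde X,\tilde U)$ with $\tilde\Gamma=[\tilde U^{\sf T}\ \tilde X^{\sf T}]^{\sf T}$ and $\tilde\Pi=I_T-\tilde\Gamma^\dagger\tilde\Gamma$, problem (RP) is: minimize over $P\in\mathbb{R}^{n\times n}$ symmetric, $K\in\mathbb{R}^{m\times n}$, $G\in\mathbb{R}^{T\times n}$ the cost ${\rm tr}(QP)+{\rm tr}(K^{\sf T}RKP)+\gamma\|\tilde\Pi G\|_F^2$ subject to $\tilde ZGPG^{\sf T}\tilde Z^{\sf T}-P+I_n\preceq0$, $P\succeq I_n$, and $[K^{\sf T}\ I_n]^{\sf T}=\tilde\Gamma G$. The signal-to-perturbation ratio is $\mu=\min\big(\|Z\|_2/\|\Delta_Z\|_2,\ \sigma_{\min}(\Gamma)/\|\Delta_\Gamma\|_2\big)$ with $\Delta_\Gamma=[\Delta_U^{\sf T}\ \Delta_X^{\sf T}]^{\sf T}$ (a ratio with zero denominator is $+\infty$). $\|\cdot\|_2$ is the spectral norm, $\sigma_{\min}$ the smallest singular value, $\rho$ the spectral radius. *)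

From HB Require Import structures.
From mathcomp Require Import all_boot all_order all_algebra.
From mathcomp Require Import all_classical all_reals.
From mathcomp Require Import complex.
Set Implicit Arguments. Unset Strict Implicit. Unset Printing Implicit Defensive.
Import Order.TTheory GRing.Theory Num.Theory.
Local Open Scope classical_set_scope.
Local Open Scope ring_scope.

Section Defs.
Variable R : realType.

Definition vnorm k (v : 'cV[R]_k) : R := Num.sqrt (\sum_i (v i 0) ^+ 2).

Definition spec_norm p q (A : 'M[R]_(p, q)) : R :=
  sup [set vnorm (A *m x) | x in [set x : 'cV[R]_q | vnorm x = 1]].

(* smallest singular value: the min(p,q)-th singular value of A *)
Definition sigma_min p q (A : 'M[R]_(p, q)) : R :=
  if (p <= q)%N then
    inf [set vnorm (A^T *m y) | y in [set y : 'cV[R]_p | vnorm y = 1]]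
  else
    inf [set vnorm (A *m x) | x in [set x : 'cV[R]_q | vnorm x = 1]].

Definition frob2 p q (A : 'M[R]_(p, q)) : R := \sum_i \sum_j (A i j) ^+ 2.

Definition is_pinv p q (A : 'M[R]_(p, q)) (B : 'M[R]_(q, p)) : Prop :=
  [/\ A *m B *m A = A, B *m A *m B = B,
      (A *m B)^T = A *m B & (B *m A)^T = B *m A].
Definition pinv p q (A : 'M[R]_(p, q)) : 'M[R]_(q, p) :=
  xget 0 [set B | is_pinv A B].

Definition loewner_le k (A B : 'M[R]_k) : Prop :=
  forall x : 'cV[R]_k, 0 <= (x^T *m (B - A) *m x) 0 0.

Definition is_sym k (A : 'M[R]_k) : Prop := A^T = A.
Definition is_psd k (A : 'M[R]_k) : Prop := is_sym A /\ loewner_le 0 A.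
Definition is_pd k (A : 'M[R]_k) : Prop :=
  is_sym A /\ forall x : 'cV[R]_k, x != 0 -> 0 < (x^T *m A *m x) 0 0.

Definition Gam m n T (U : 'M[R]_(m, T)) (X : 'M[R]_(n, T)) : 'M[R]_(m + n, T) :=
  col_mx U X.

Definition Pi m n T (U : 'M[R]_(m, T)) (X : 'M[R]_(n, T)) : 'M[R]_T :=
  1%:M - pinv (Gam U X) *m Gam U X.

Definition RP_feasible m n T (Z X : 'M[R]_(n, T)) (U : 'M[R]_(m, T))
    (P : 'M[R]_n) (K : 'M[R]_(m, n)) (G : 'M[R]_(T, n)) : Prop :=
  [/\ is_sym P,
      loewner_le (Z *m G *m P *m G^T *m Z^T - P + 1%:M) 0,
      loewner_le 1%:M P
    & col_mx K (1%:M : 'M[R]_n) = Gam U X *m G].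

Definition RP_cost m n T (Q : 'M[R]_n) (Rm : 'M[R]_m) (gamma : R)
    (X : 'M[R]_(n, T)) (U : 'M[R]_(m, T))
    (P : 'M[R]_n) (K : 'M[R]_(m, n)) (G : 'M[R]_(T, n)) : R :=
  \tr (Q *m P) + \tr (K^T *m Rm *m K *m P) + gamma * frob2 (Pi U X *m G).

Definition RP_optimal m n T (Q : 'M[R]_n) (Rm : 'M[R]_m) (gamma : R)
    (Z X : 'M[R]_(n, T)) (U : 'M[R]_(m, T))
    (P : 'M[R]_n) (K : 'M[R]_(m, n)) (G : 'M[R]_(T, n)) : Prop :=
  RP_feasible Z X U P K G /\
  forall P' K' G', RP_feasible Z X U P' K' G' ->
    RP_cost Q Rm gamma X U P K G <= RP_cost Q Rm gamma X U P' K' G'.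

Definition eratio (a b : R) : \bar R :=
  if b == 0 then +oo%E else (a / b)%:E.

Definition spr m n T (Z X DZ DX : 'M[R]_(n, T)) (U DU : 'M[R]_(m, T)) : \bar R :=
  Order.min (eratio (spec_norm Z) (spec_norm DZ))
            (eratio (sigma_min (Gam U X)) (spec_norm (Gam DU DX))).

Definition cmod (z : R[i]) : R := let: Complex a b := z in Num.sqrt (a ^+ 2 + b ^+ 2).

Definition spectral_radius n (A : 'M[R]_n) : R :=
  sup [set cmod l | l in [set l : R[i] | eigenvalue (map_mx (real_complex R) A) l]].

End Defs.

From mathcomp Require Import all_boot all_order all_algebra.
From mathcomp Require Import all_classical all_reals.
From mathcomp Require Import complex.
From mathcomp Require Import ring lra.
Import Order.TTheory GRing.Theory Num.Theory.
Local Open Scope classical_set_scope.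
Local Open Scope ring_scope.
Set Implicit Arguments. Unset Strict Implicit. Unset Printing Implicit Defensive.

(* Write [W = [B A]], so that [Z = W Gamma] and, by the last constraint of
   (RP), [A + B K = (Z + W Delta_Gamma) G].  The LMI constraint of (RP) makes
   [P] a Lyapunov certificate for [(Z + Delta_Z) G]; trading [Delta_Z] for
   [W Delta_Gamma] costs at most [||M|| (2 |u| |s| + |s|^2 + 2 |u| |d|)] in
   the quadratic form, where [u = Z^T x] and both perturbations have
   [|s|, |d| <= eps ||Z|| |x|] with [eps] the inverse of the threshold on [mu]
   (for [s] through [sigma_min(Gamma) |W^T x| <= |Gamma^T W^T x| = |Z^T x|]).
   So [P - (A + B K) P (A + B K)^T >= (1 - ||M|| ||Z||^2 (4 eps + eps^2)) I],
   the threshold is exactly what makes this coefficient positive, and the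
   discrete Lyapunov inequality puts every eigenvalue in the open unit disc. *)

Section Euclidean.
Variable R : realType.

Definition dot k (u v : 'cV[R]_k) : R := (u^T *m v) 0 0.

Lemma dotE k (u v : 'cV[R]_k) : dot u v = \sum_i u i 0 * v i 0.
Proof. by rewrite /dot mxE; apply: eq_bigr => i _; rewrite mxE. Qed.

Lemma dotC k (u v : 'cV[R]_k) : dot u v = dot v u.
Proof. by rewrite !dotE; apply: eq_bigr => i _; rewrite mulrC. Qed.

Lemma dotDr k (u v w : 'cV[R]_k) : dot u (v + w) = dot u v + dot u w.
Proof. by rewrite /dot mulmxDr mxE. Qed.

Lemma dotDl k (u v w : 'cV[R]_k) : dot (v + w) u = dot v u + dot w u.
Proof. by rewrite dotC dotDr !(dotC u). Qed.

Lemma dotZr k a (u v : 'cV[R]_k) : dot u (a *: v) = a * dot u v.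
Proof. by rewrite /dot -scalemxAr mxE. Qed.

Lemma dotZl k a (u v : 'cV[R]_k) : dot (a *: v) u = a * dot v u.
Proof. by rewrite dotC dotZr dotC. Qed.

Lemma dotNr k (u v : 'cV[R]_k) : dot u (- v) = - dot u v.
Proof. by rewrite -scaleN1r dotZr mulN1r. Qed.

Lemma dotNl k (u v : 'cV[R]_k) : dot (- v) u = - dot v u.
Proof. by rewrite dotC dotNr dotC. Qed.

Lemma dotBr k (u v w : 'cV[R]_k) : dot u (v - w) = dot u v - dot u w.
Proof. by rewrite dotDr dotNr. Qed.

Lemma dotBl k (u v w : 'cV[R]_k) : dot (v - w) u = dot v u - dot w u.
Proof. by rewrite dotDl dotNl. Qed.

Lemma dot0r k (u : 'cV[R]_k) : dot u 0 = 0.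
Proof. by rewrite /dot mulmx0 mxE. Qed.

Lemma dot_trmx p q (C : 'M[R]_(p, q)) (x : 'cV_p) (w : 'cV_q) :
  dot x (C *m w) = dot (C^T *m x) w.
Proof. by rewrite /dot trmx_mul trmxK mulmxA. Qed.

Lemma dot_ge0 k (u : 'cV[R]_k) : 0 <= dot u u.
Proof. by rewrite dotE; apply: sumr_ge0 => i _; rewrite -expr2 sqr_ge0. Qed.

Lemma dot_eq0 k (u : 'cV[R]_k) : dot u u = 0 -> u = 0.
Proof.
rewrite dotE => /psumr_eq0P u0; apply/matrixP => i j; rewrite (ord1 j) mxE.
have /eqP := u0 (fun l _ => ltac:(by rewrite -expr2 sqr_ge0)) i isT.
by rewrite mulf_eq0 orbb => /eqP.
Qed.

Lemma dot_sqr_le k (u v : 'cV[R]_k) : dot u v ^+ 2 <= dot u u * dot v v.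
Proof.
set s := dot u u; set d := dot u v; set t := dot v v.
have [s0|sn0] := eqVneq s 0.
  by rewrite /d (dot_eq0 s0) dotC dot0r expr0n s0 mul0r.
have s_gt0 : 0 < s by rewrite lt_def sn0 dot_ge0.
have : 0 <= s * (s * t - d ^+ 2).
  have -> : s * (s * t - d ^+ 2) = dot (s *: v - d *: u) (s *: v - d *: u).
    by rewrite !(dotBl, dotBr, dotZl, dotZr) (dotC v u) -/s -/d -/t; ring.
  exact: dot_ge0.
by rewrite pmulr_rge0 // subr_ge0.
Qed.

Lemma vnormE k (u : 'cV[R]_k) : vnorm u = Num.sqrt (dot u u).
Proof. by rewrite /vnorm dotE; congr Num.sqrt; apply: eq_bigr => i _; rewrite expr2. Qed.

Lemma vnorm_ge0 k (u : 'cV[R]_k) : 0 <= vnorm u.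
Proof. by rewrite vnormE sqrtr_ge0. Qed.

Lemma vnorm_sqr k (u : 'cV[R]_k) : vnorm u ^+ 2 = dot u u.
Proof. by rewrite vnormE sqr_sqrtr // dot_ge0. Qed.

Lemma vnorm_eq0 k (u : 'cV[R]_k) : vnorm u = 0 -> u = 0.
Proof. by move=> u0; apply: dot_eq0; rewrite -vnorm_sqr u0 expr0n. Qed.

Lemma vnorm0 k : vnorm (0 : 'cV[R]_k) = 0.
Proof. by rewrite vnormE dot0r sqrtr0. Qed.

Lemma vnormZ k a (u : 'cV[R]_k) : vnorm (a *: u) = `|a| * vnorm u.
Proof. by rewrite !vnormE dotZl dotZr mulrA -expr2 sqrtrM ?sqr_ge0 // sqrtr_sqr. Qed.

Lemma vnormN k (u : 'cV[R]_k) : vnorm (- u) = vnorm u.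
Proof. by rewrite -scaleN1r vnormZ normrN normr1 mul1r. Qed.

Lemma dot_le_vnorm k (u v : 'cV[R]_k) : dot u v <= vnorm u * vnorm v.
Proof.
rewrite !vnormE -sqrtrM ?dot_ge0 //; apply: le_trans (ler_norm _) _.
by rewrite -sqrtr_sqr ler_sqrt ?mulr_ge0 ?dot_ge0 // dot_sqr_le.
Qed.

Lemma frob2_ge0 p q (A : 'M[R]_(p, q)) : 0 <= frob2 A.
Proof. by apply: sumr_ge0 => i _; apply: sumr_ge0 => j _; apply: sqr_ge0. Qed.

Lemma vnorm_mulmx_le_frob p q (A : 'M[R]_(p, q)) (x : 'cV_q) :
  vnorm (A *m x) <= Num.sqrt (frob2 A) * vnorm x.
Proof.
rewrite !vnormE -sqrtrM ?frob2_ge0 // ler_sqrt ?mulr_ge0 ?frob2_ge0 ?dot_ge0 //.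
rewrite dotE /frob2 mulr_suml; apply: ler_sum => i _.
have -> : (A *m x) i 0 = dot (row i A)^T x.
  by rewrite dotE mxE; apply: eq_bigr => j _; rewrite !mxE.
have -> : \sum_j A i j ^+ 2 = dot (row i A)^T (row i A)^T.
  by rewrite dotE; apply: eq_bigr => j _; rewrite !mxE expr2.
by rewrite -expr2 dot_sqr_le.
Qed.


Lemma loewner_leP k (A B : 'M[R]_k) :
  loewner_le A B <-> forall x, dot x (A *m x) <= dot x (B *m x).
Proof.
have E x : (x^T *m (B - A) *m x) 0 0 = dot x (B *m x) - dot x (A *m x).
  by rewrite -mulmxA -/(dot _ _) mulmxBl dotBr.
by split=> H x; [have := H x; rewrite E subr_ge0 | rewrite E subr_ge0].
Qed.

Lemma sup_ge0 (E : set R) : has_ubound E -> (forall x, E x -> 0 <= x) -> 0 <= sup E.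
Proof.
move=> ubE E0; have [->|/set0P[x Ex]] := eqVneq E set0; first by rewrite sup0.
by apply: le_trans (E0 x Ex) _; exact: ub_le_sup.
Qed.

Lemma inf_ge0 (E : set R) : (forall x, E x -> 0 <= x) -> 0 <= inf E.
Proof.
move=> E0; have [->|/set0P En0] := eqVneq E set0; first by rewrite inf0.
exact: lb_le_inf.
Qed.

Section SpectralNorm.
Variables p q : nat.
Implicit Types A : 'M[R]_(p, q).

Lemma spec_norm_has_ubound A :
  has_ubound [set vnorm (A *m x) | x in [set x : 'cV[R]_q | vnorm x = 1]].
Proof.
exists (Num.sqrt (frob2 A)) => _ [x /= x1 <-].
by have := vnorm_mulmx_le_frob A x; rewrite x1 mulr1.
Qed.

Lemma spec_norm_ge0 A : 0 <= spec_norm A.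
Proof. by apply: sup_ge0; [exact: spec_norm_has_ubound | move=> _ [x _ <-]; exact: vnorm_ge0]. Qed.

Lemma sigma_min_ge0 A : 0 <= sigma_min A.
Proof. by rewrite /sigma_min; case: ifP => _; apply: inf_ge0 => _ [y _ <-]; exact: vnorm_ge0. Qed.

Lemma normalize_vnorm k (x : 'cV[R]_k) : vnorm x != 0 -> vnorm ((vnorm x)^-1 *: x) = 1.
Proof. by move=> xn0; rewrite vnormZ ger0_norm ?invr_ge0 ?vnorm_ge0 // mulVf. Qed.

Lemma vnorm_mulmx_le A (x : 'cV_q) : vnorm (A *m x) <= spec_norm A * vnorm x.
Proof.
have [x0|xn0] := eqVneq (vnorm x) 0.
  by rewrite (vnorm_eq0 x0) mulmx0 !vnorm0 mulr0.
have x_gt0 : 0 < vnorm x by rewrite lt_def xn0 vnorm_ge0.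
have := ub_le_sup (spec_norm_has_ubound A) (ex_intro2 _ _ _ (normalize_vnorm xn0) erefl).
rewrite -scalemxAr vnormZ ger0_norm ?invr_ge0 ?vnorm_ge0 //.
by rewrite ler_pdivrMl // mulrC.
Qed.

Lemma vnorm_trmx_mulmx_le A (x : 'cV_p) : vnorm (A^T *m x) <= spec_norm A * vnorm x.
Proof.
set y := A^T *m x.
have [y0|yn0] := eqVneq (vnorm y) 0.
  by rewrite y0 mulr_ge0 ?spec_norm_ge0 ?vnorm_ge0.
have y_gt0 : 0 < vnorm y by rewrite lt_def yn0 vnorm_ge0.
rewrite -(ler_pM2r y_gt0) -expr2 vnorm_sqr {1}/y -dot_trmx.
apply: le_trans (dot_le_vnorm _ _) _.
by rewrite mulrC mulrAC ler_wpM2r ?vnorm_ge0 // vnorm_mulmx_le.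
Qed.

Lemma sigma_min_le A (y : 'cV_p) : (p <= q)%N ->
  sigma_min A * vnorm y <= vnorm (A^T *m y).
Proof.
move=> le_pq; rewrite /sigma_min le_pq.
have [y0|yn0] := eqVneq (vnorm y) 0; first by rewrite y0 mulr0 vnorm_ge0.
have y_gt0 : 0 < vnorm y by rewrite lt_def yn0 vnorm_ge0.
have lbE : has_lbound [set vnorm (A^T *m y) | y in [set y : 'cV[R]_p | vnorm y = 1]].
  by exists 0 => _ [w _ <-]; exact: vnorm_ge0.
have := ge_inf lbE (ex_intro2 _ _ _ (normalize_vnorm yn0) erefl).
rewrite -scalemxAr vnormZ ger0_norm ?invr_ge0 ?vnorm_ge0 //.
by rewrite ler_pdivlMl // mulrC.
Qed.

End SpectralNorm.

Lemma dot_mulmx_le k (A : 'M[R]_k) (x : 'cV_k) : dot x (A *m x) <= spec_norm A * dot x x.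
Proof.
apply: le_trans (dot_le_vnorm _ _) _.
by rewrite -vnorm_sqr expr2 mulrCA ler_wpM2l ?vnorm_ge0 ?vnorm_mulmx_le.
Qed.

End Euclidean.

Section Eigenvalues.
Variable R : realType.
Local Notation Re := (@complex.Re R).
Local Notation Im := (@complex.Im R).

Lemma ReD (a b : R[i]) : Re (a + b) = Re a + Re b.
Proof. by case: a; case: b. Qed.

Lemma ImD (a b : R[i]) : Im (a + b) = Im a + Im b.
Proof. by case: a; case: b. Qed.

Lemma ReM (a b : R[i]) : Re (a * b) = Re a * Re b - Im a * Im b.
Proof. by case: a; case: b. Qed.

Lemma ImM (a b : R[i]) : Im (a * b) = Re a * Im b + Im a * Re b.
Proof. by case: a; case: b. Qed.

Lemma Re_sum k (f : 'I_k -> R[i]) : Re (\sum_i f i) = \sum_i Re (f i).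
Proof. exact: (big_morph _ ReD). Qed.

Lemma Im_sum k (f : 'I_k -> R[i]) : Im (\sum_i f i) = \sum_i Im (f i).
Proof. exact: (big_morph _ ImD). Qed.

Lemma cmod_ge0 (z : R[i]) : 0 <= cmod z.
Proof. by case: z => a b; exact: sqrtr_ge0. Qed.

Lemma cmod_sqr (z : R[i]) : cmod z ^+ 2 = Re z ^+ 2 + Im z ^+ 2.
Proof. by case: z => a b; rewrite /cmod sqr_sqrtr // addr_ge0 ?sqr_ge0. Qed.

(* [eigenvalueP] provides a left eigenvector, hence the transposes. *)
Lemma eigenvalue_real_pair n (K : 'M[R]_n) (l : R[i]) :
  eigenvalue (map_mx (real_complex R) K) l ->
  exists x y : 'cV[R]_n, [/\ 0 < dot x x + dot y y,
    K^T *m x = Re l *: x - Im l *: y & K^T *m y = Im l *: x + Re l *: y].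
Proof.
case/eigenvalueP => v vK vn0.
exists (\col_i Re (v 0 i)), (\col_i Im (v 0 i)); split.
- set x := \col_i Re (v 0 i); set y := \col_i Im (v 0 i).
  rewrite lt_def addr_ge0 ?dot_ge0 // andbT; apply: contra vn0 => /eqP xy0.
  have [/dot_eq0/matrixP x0 /dot_eq0/matrixP y0] : dot x x = 0 /\ dot y y = 0.
    by have := dot_ge0 x; have := dot_ge0 y; lra.
  apply/eqP/matrixP => i j; rewrite (ord1 i) mxE.
  move: (x0 j 0) (y0 j 0); rewrite !mxE.
  by case: (v 0 j) => a b /= -> ->.
- apply/matrixP => i j; rewrite (ord1 j) !mxE.
  have := congr1 (fun M : 'M[R[i]]_(1, n) => Re (M 0 i)) vK.
  rewrite /= !mxE Re_sum ReM => <-.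
  by apply: eq_bigr => k _; rewrite !mxE ReM /= mulr0 subr0 mulrC.
- apply/matrixP => i j; rewrite (ord1 j) !mxE.
  have := congr1 (fun M : 'M[R[i]]_(1, n) => Im (M 0 i)) vK.
  rewrite /= !mxE Im_sum ImM [RHS]addrC => <-.
  by apply: eq_bigr => k _; rewrite !mxE ImM /= mulr0 add0r mulrC.
Qed.

Lemma lyapunov_eigenvalue n (K P : 'M[R]_n) (e L : R) (l : R[i]) :
  0 < e -> 0 < L -> P^T = P ->
  (forall x, 0 <= dot x (P *m x)) ->
  (forall x, dot x (P *m x) <= L * dot x x) ->
  (forall x, dot (K^T *m x) (P *m (K^T *m x)) <= dot x (P *m x) - e * dot x x) ->
  eigenvalue (map_mx (real_complex R) K) l -> cmod l ^+ 2 <= 1 - e / L.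
Proof.
move=> e_gt0 L_gt0 Psym P_ge0 P_le decr /eigenvalue_real_pair[x [y [w_gt0 Kx Ky]]].
set w := dot x x + dot y y in w_gt0.
set pw := dot x (P *m x) + dot y (P *m y).
set t := 1 - cmod l ^+ 2.
have Psymdot u v : dot u (P *m v) = dot v (P *m u) by rewrite dot_trmx Psym dotC.
have rot : dot (K^T *m x) (P *m (K^T *m x)) + dot (K^T *m y) (P *m (K^T *m y))
    = cmod l ^+ 2 * pw.
  rewrite Kx Ky cmod_sqr !mulmxBr !mulmxDr -!scalemxAr.
  by rewrite !(dotBl, dotBr, dotDl, dotDr, dotZl, dotZr) (Psymdot y x) /pw; ring.
have ew_le : e * w <= t * pw.
  by have := decr x; have := decr y; rewrite /t mulrBl mul1r -rot /w /pw; lra.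
have pw_ge0 : 0 <= pw by rewrite addr_ge0.
have pw_le : pw <= L * w by have := P_le x; have := P_le y; rewrite /w /pw; lra.
have ew_gt0 : 0 < e * w by rewrite mulr_gt0.
have t_ge0 : 0 <= t by rewrite leNgt; apply/negP => t_lt0; nra.
rewrite lerBrDl -lerBrDr -/t ler_pdivrMr // -(ler_pM2r w_gt0).
by nra.
Qed.

Lemma spectral_radius_lt1 n (A : 'M[R]_n) (r : R) : r < 1 ->
  (forall l, eigenvalue (map_mx (real_complex R) A) l -> cmod l ^+ 2 <= r) ->
  spectral_radius A < 1.
Proof.
move=> r_lt1 bound; apply: (@le_lt_trans _ _ (Num.sqrt r)).
  rewrite /spectral_radius.
  have [->|/set0P ne] := eqVneq [set cmod l | l in
    [set l : R[i] | eigenvalue (map_mx (real_complex R) A) l]] set0.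
    by rewrite sup0 sqrtr_ge0.
  apply: (ge_sup ne) => _ [l /bound lr <-].
  rewrite -[cmod l]ger0_norm ?cmod_ge0 // -sqrtr_sqr ler_sqrt //.
  exact: le_trans (sqr_ge0 _) lr.
have [r_le0|r_gt0] := lerP r 0; first by rewrite ler0_sqrtr.
by rewrite -sqrtr1 ltr_sqrt.
Qed.

End Eigenvalues.

Section Margin.
Variable R : realType.
Implicit Types z mm e a d : R.

(* The threshold on [mu] is [1 / stab_margin ||Z|| ||M||]; for [z mm != 0],
   [eps := stab_margin z mm] solves [2 z^2 mm (2 eps + eps^2) = 1]. *)
Definition stab_margin z mm := -1 + Num.sqrt (1 + 1 / (2 * z ^+ 2 * mm)).

Lemma stab_margin_ge0 z mm : 0 <= mm -> 0 <= stab_margin z mm.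
Proof.
move=> mm_ge0; have d_ge0 : 0 <= 1 / (2 * z ^+ 2 * mm).
  by rewrite mul1r invr_ge0; apply: mulr_ge0 => //; rewrite mulr_ge0 ?sqr_ge0.
by rewrite /stab_margin addrC subr_ge0 -{1}sqrtr1 ler_sqrt ?lerDl // addr_ge0.
Qed.

Lemma stab_margin_eq0 z mm : 0 < mm -> stab_margin z mm = 0 -> z = 0.
Proof.
move=> mm_gt0; rewrite /stab_margin addrC => /eqP; rewrite subr_eq0 => /eqP s1.
have : 1 + 1 / (2 * z ^+ 2 * mm) = 1 + 0.
  rewrite addr0 -(sqr_sqrtr (a := 1 + _)) ?s1 ?expr1n // addr_ge0 // mul1r invr_ge0.
  by apply: mulr_ge0 (ltW mm_gt0); rewrite mulr_ge0 ?sqr_ge0.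
move=> /addrI /eqP; rewrite mul1r invr_eq0 !mulf_eq0 pnatr_eq0 (gt_eqF mm_gt0) /=.
by rewrite orbF orbb => /eqP.
Qed.

Lemma stab_margin_contraction z mm : 0 <= mm ->
  mm * z ^+ 2 * (4 * stab_margin z mm + stab_margin z mm ^+ 2) < 1.
Proof.
move=> mm_ge0; set a := mm * z ^+ 2.
have a_ge0 : 0 <= a by rewrite mulr_ge0 ?sqr_ge0.
have [->|an0] := eqVneq a 0; first by rewrite mul0r ltr01.
have a_gt0 : 0 < a by rewrite lt_def an0 a_ge0.
have a2 : 2 * z ^+ 2 * mm = 2 * a by rewrite /a; ring.
set t := 1 / (2 * z ^+ 2 * mm).
have ta : 2 * a * t = 1 by rewrite /t a2 mul1r mulfV // mulf_neq0 // pnatr_eq0.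
have t_gt0 : 0 < t by rewrite /t a2 mul1r invr_gt0 mulr_gt0.
set s := Num.sqrt (1 + t).
have s_sqr : s ^+ 2 = 1 + t by rewrite sqr_sqrtr // addr_ge0 // ltW.
have s_gt1 : 1 < s by rewrite -sqrtr1 ltr_sqrt ?ltrDl // addr_gt0.
rewrite /stab_margin -/t -/s.
have -> : a * (4 * (-1 + s) + (-1 + s) ^+ 2) = 2 * a * t - a * (-1 + s) ^+ 2.
  have -> : t = s ^+ 2 - 1 by rewrite s_sqr addrC addKr.
  by ring.
by rewrite ta ltrBlDr ltrDl mulr_gt0 // exprn_gt0 // addrC subr_gt0.
Qed.

(* The side condition on [e = 0] is needed because [0^-1 = 0]. *)
Lemma le_mul_of_inv_lt_div e a d : 0 <= e -> 0 <= a -> 0 <= d ->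
  (e = 0 -> a = 0) -> (d = 0 \/ e^-1 < a / d) -> d <= e * a.
Proof.
move=> e_ge0 a_ge0 d_ge0 ea [->|lt_ad]; first by rewrite mulr_ge0.
have [e0|en0] := eqVneq e 0; first by move: lt_ad; rewrite e0 (ea e0) invr0 mul0r ltxx.
have e_gt0 : 0 < e by rewrite lt_def en0.
have [d0|dn0] := eqVneq d 0; first by rewrite d0 mulr_ge0.
have d_gt0 : 0 < d by rewrite lt_def dn0.
by move: lt_ad; rewrite ltr_pdivlMr // mulrC ltr_pdivrMr // mulrC => /ltW.
Qed.

Lemma perturbation_term_le mm z e nu ns nd X :
  0 <= mm -> 0 <= e -> 0 <= z -> 0 <= X -> 0 <= nu -> 0 <= ns -> 0 <= nd ->
  nu <= z * X -> (0 < mm -> ns <= e * z * X /\ nd <= e * z * X) ->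
  mm * (2 * nu * ns + ns ^+ 2 + 2 * nu * nd)
    <= mm * z ^+ 2 * (4 * e + e ^+ 2) * X ^+ 2.
Proof.
move=> mm_ge0 e_ge0 z_ge0 X_ge0 nu_ge0 ns_ge0 nd_ge0 nu_le bounds.
have [->|mmn0] := eqVneq mm 0; first by rewrite !mul0r.
have [ns_le nd_le] : ns <= e * z * X /\ nd <= e * z * X.
  by apply: bounds; rewrite lt_def mmn0.
have ezX_ge0 : 0 <= e * z * X by rewrite !mulr_ge0.
have uns : nu * ns <= z * X * (e * z * X) by apply: ler_pM.
have sns : ns * ns <= e * z * X * (e * z * X) by apply: ler_pM.
have und : nu * nd <= z * X * (e * z * X) by apply: ler_pM.
have -> : mm * z ^+ 2 * (4 * e + e ^+ 2) * X ^+ 2 = mm *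
    (2 * (z * X * (e * z * X)) + e * z * X * (e * z * X) + 2 * (z * X * (e * z * X))).
  by ring.
by rewrite ler_wpM2l // expr2; lra.
Qed.

End Margin.

Section ClosedLoop.
Variable R : realType.

Lemma quad_form_perturb_le T (M : 'M[R]_T) (u s d : 'cV_T) :
  0 <= dot d (M *m d) ->
  dot (u + s) (M *m (u + s)) <= dot (u + d) (M *m (u + d))
    + spec_norm M * (2 * vnorm u * vnorm s + vnorm s ^+ 2 + 2 * vnorm u * vnorm d).
Proof.
move=> d_ge0.
have up a b : dot a (M *m b) <= spec_norm M * (vnorm a * vnorm b).
  apply: le_trans (dot_le_vnorm _ _) _; rewrite mulrCA ler_wpM2l ?vnorm_ge0 //.
  exact: vnorm_mulmx_le.
have lo a b : - (spec_norm M * (vnorm a * vnorm b)) <= dot a (M *m b).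
  by rewrite lerNl -dotNl -(vnormN a) up.
have := up u s; have := up s u; have := up s s; have := lo u d; have := lo d u.
by rewrite !mulmxDr !(dotDl, dotDr) expr2; lra.
Qed.

Lemma perturbation_vnorm_le k n T (W : 'M[R]_(n, k)) (Gm DG : 'M[R]_(k, T))
    (Z DZ : 'M[R]_(n, T)) (e : R) (x : 'cV_n) :
  (k <= T)%N -> Z = W *m Gm -> 0 <= e -> (e = 0 -> spec_norm Z = 0) ->
  (spec_norm DZ = 0 \/ e^-1 < spec_norm Z / spec_norm DZ) ->
  (spec_norm DG = 0 \/ e^-1 < sigma_min Gm / spec_norm DG) ->
  vnorm ((W *m DG)^T *m x) <= e * spec_norm Z * vnorm x
  /\ vnorm (DZ^T *m x) <= e * spec_norm Z * vnorm x.
Proof.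
move=> le_kT ZE e_ge0 e0 ratioZ ratioG; split.
  set w := vnorm (W^T *m x).
  have sw_le : sigma_min Gm * w <= spec_norm Z * vnorm x.
    apply: le_trans (sigma_min_le _ _ le_kT) _.
    by rewrite mulmxA -trmx_mul -ZE vnorm_trmx_mulmx_le.
  have sw_ge0 : 0 <= sigma_min Gm * w := mulr_ge0 (sigma_min_ge0 _) (vnorm_ge0 _).
  apply: le_trans (_ : _ <= spec_norm DG * w) _.
    by rewrite trmx_mul -mulmxA vnorm_trmx_mulmx_le.
  apply: le_trans (_ : _ <= e * (sigma_min Gm * w)) _; last first.
    by rewrite -mulrA ler_wpM2l.
  apply: le_mul_of_inv_lt_div => //.
  - exact: mulr_ge0 (spec_norm_ge0 _) (vnorm_ge0 _).
  - move=> /e0 z0; apply/eqP; rewrite eq_le sw_ge0 andbT.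
    by apply: le_trans sw_le _; rewrite z0 mul0r.
  - case: ratioG => [->|lt_ratio]; first by left; rewrite mul0r.
    have [->|wn0] := eqVneq w 0; first by left; rewrite mulr0.
    by right; rewrite invfM mulrACA mulfV // mulr1.
apply: le_trans (vnorm_trmx_mulmx_le _ _) _.
rewrite ler_wpM2r ?vnorm_ge0 // le_mul_of_inv_lt_div ?spec_norm_ge0 //.
Qed.

(* When [M = 0] the margin vanishes and the data bound no perturbation, but
   then none is needed. *)
Lemma closed_loop_decrease n T (Z DZ S : 'M[R]_(n, T)) (G : 'M_(T, n))
    (P : 'M_n) (e : R) (x : 'cV_n) :
  0 <= e -> (forall y, 0 <= dot y (P *m y)) ->
  loewner_le ((Z + DZ) *m G *m P *m G^T *m (Z + DZ)^T - P + 1%:M) 0 ->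
  (0 < spec_norm (G *m P *m G^T) ->
     vnorm (S^T *m x) <= e * spec_norm Z * vnorm x
     /\ vnorm (DZ^T *m x) <= e * spec_norm Z * vnorm x) ->
  dot (((Z + S) *m G)^T *m x) (P *m (((Z + S) *m G)^T *m x))
    <= dot x (P *m x)
       - (1 - spec_norm (G *m P *m G^T) * spec_norm Z ^+ 2 * (4 * e + e ^+ 2))
         * dot x x.
Proof.
move=> e_ge0 P_ge0 /loewner_leP feas bounds.
set M := G *m P *m G^T; set u := Z^T *m x; set s := S^T *m x; set d := DZ^T *m x.
have MquadE v : dot v (M *m v) = dot (G^T *m v) (P *m (G^T *m v)).
  by rewrite /M -!mulmxA dot_trmx.
have feas_x : dot (u + d) (M *m (u + d)) <= dot x (P *m x) - dot x x.
  have := feas x; rewrite mul0mx dot0r mulmxDl mulmxBl mul1mx dotDr dotBr.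
  have -> : (Z + DZ) *m G *m P *m G^T *m (Z + DZ)^T *m x = (Z + DZ) *m (M *m (u + d)).
    by rewrite /M /u /d -mulmxDl -linearD /= !mulmxA.
  by rewrite dot_trmx linearD /= mulmxDl -/u -/d; lra.
have -> : ((Z + S) *m G)^T *m x = G^T *m (u + s).
  by rewrite trmx_mul -mulmxA linearD /= mulmxDl.
have d_ge0 : 0 <= dot d (M *m d) by rewrite MquadE.
rewrite -MquadE; apply: le_trans (quad_form_perturb_le u s d_ge0) _.
have := perturbation_term_le (spec_norm_ge0 M) e_ge0 (spec_norm_ge0 Z) (vnorm_ge0 x)
  (vnorm_ge0 u) (vnorm_ge0 s) (vnorm_ge0 d) (vnorm_trmx_mulmx_le Z x) bounds.
by rewrite (vnorm_sqr x); lra.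
Qed.

Lemma closed_loop_eq n m T (A : 'M[R]_n) (B : 'M[R]_(n, m)) (Z X DX : 'M[R]_(n, T))
    (U DU : 'M[R]_(m, T)) (K : 'M[R]_(m, n)) (G : 'M[R]_(T, n)) :
  Z = A *m X + B *m U -> col_mx K 1%:M = Gam (U + DU) (X + DX) *m G ->
  A + B *m K = (Z + row_mx B A *m Gam DU DX) *m G.
Proof.
move=> ZE KE; have <- : row_mx B A *m col_mx K 1%:M = A + B *m K.
  by rewrite mul_row_col mulmx1 addrC.
rewrite KE mulmxA /Gam !mul_row_col !mulmxDr ZE.
by rewrite addrACA [A *m X + _]addrC.
Qed.

Lemma lt_eratio (r a b : R) : (r%:E < eratio a b)%E -> b = 0 \/ r < a / b.
Proof. by rewrite /eratio; case: eqP => [->|_]; [left | rewrite lte_fin; right]. Qed.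

Lemma lt_spr m n T (Z X DZ DX : 'M[R]_(n, T)) (U DU : 'M[R]_(m, T)) (r : R) :
  (r%:E < spr Z X DZ DX U DU)%E ->
  (spec_norm DZ = 0 \/ r < spec_norm Z / spec_norm DZ)
  /\ (spec_norm (Gam DU DX) = 0 \/ r < sigma_min (Gam U X) / spec_norm (Gam DU DX)).
Proof. by rewrite /spr lt_min => /andP[/lt_eratio ? /lt_eratio ?]. Qed.

End ClosedLoop.

Theorem proposition6 (R : realType) (n m T : nat)
    (A : 'M[R]_n) (B : 'M[R]_(n, m))
    (Z X : 'M[R]_(n, T)) (U : 'M[R]_(m, T))
    (Q : 'M[R]_n) (Rm : 'M[R]_m) (gamma : R)
    (DZ DX : 'M[R]_(n, T)) (DU : 'M[R]_(m, T))
    (PD : 'M[R]_n) (KD : 'M[R]_(m, n)) (GD : 'M[R]_(T, n)) :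
  is_psd Q -> is_pd Rm -> 0 <= gamma ->
  \rank (Gam U X) = (m + n)%N ->
  Z = A *m X + B *m U ->
  RP_optimal Q Rm gamma (Z + DZ) (X + DX) (U + DU) PD KD GD ->
  (((- 1 + Num.sqrt (1 + 1 / (2 * spec_norm Z ^+ 2
        * spec_norm (GD *m PD *m GD^T)))) ^-1)%:E <
     spr Z X DZ DX U DU)%E ->
  spectral_radius (A + B *m KD) < 1.
Proof.
move=> _ _ _ rk ZE [[Psym feas /loewner_leP P_ge1 KE] _] mu_gt.
have le_mnT : (m + n <= T)%N by rewrite -rk rank_leq_col.
have ZGam : Z = row_mx B A *m Gam U X by rewrite mul_row_col ZE addrC.
set mm := spec_norm (GD *m PD *m GD^T).
set e := stab_margin (spec_norm Z) mm.
have e_ge0 : 0 <= e by apply: stab_margin_ge0; exact: spec_norm_ge0.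
have [ratioZ ratioG] := lt_spr (r := e^-1) mu_gt.
set c := mm * spec_norm Z ^+ 2 * (4 * e + e ^+ 2).
have c_lt1 : c < 1 by apply: stab_margin_contraction; exact: spec_norm_ge0.
have P_ge0 y : 0 <= dot y (PD *m y).
  by apply: le_trans (dot_ge0 y) _; have := P_ge1 y; rewrite mul1mx.
(* [spec_norm PD] vanishes when [n = 0]; any positive bound on [PD] will do. *)
set L := Num.max 1 (spec_norm PD).
have L_gt0 : 0 < L by rewrite lt_max ltr01.
rewrite (closed_loop_eq ZE KE).
apply: (@spectral_radius_lt1 _ _ _ (1 - (1 - c) / L)) => [|l].
  by rewrite ltrBlDr ltrDl divr_gt0 // subr_gt0.
apply: (lyapunov_eigenvalue _ L_gt0 Psym P_ge0); first by rewrite subr_gt0.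
  move=> y; apply: le_trans (dot_mulmx_le _ _) _.
  by rewrite ler_wpM2r ?dot_ge0 // le_max lexx orbT.
move=> y; apply: closed_loop_decrease => // mm_gt0.
apply: perturbation_vnorm_le ZGam _ _ ratioZ ratioG => //.
exact: stab_margin_eq0.
Qed.
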